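(* Let $R$ be a commutative ring with ${\rm char}(R)\neq 2$ and $R_2\neq\{0\}$, and let $G$ be a non-abelian group with classical involution $*$ (the $R$-linear map on $RG$ with $g\mapsto g^{-1}$ for $g\in G$). Then $(RG)^-_*$ is commutative if and only if one of the following holds: \begin{enumerate} \item $G=K\rtimes\langle x\rangle$, where $K=\langle g\in G\mid g^2\neq 1\rangle$ is abelian, $x^2=1$, $xkx=k^{-1}$ for all $k\in K$, and $R_2^2=\{0\}$; \item ${\rm char}(R)=4$, $G$ has exponent $4$, $G'$ is cyclic of order $2$, $G/G'$ is an elementary abelian $2$-group, and, if $R_2^2\neq\{0\}$, elements of order $2$ in $G$ commute with each other. \end{enumerate}
   Context: $(RG)^-_*=\{\alpha\in RG\mid \alpha^*=-\alpha\}$; $R_2=\{r\in R\mid 2r=0\}$; $R_2^2=\{0\}$ means $r_1r_2=0$ for all $r_1,r_2\in R_2$. $G'$ is the commutator subgroup of $G$. *)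

(* Arbitrary (possibly infinite) groups are modelled by
   mathcomp's [groupType] (boot/monoid.v); the group ring RG is modelled by
   formal finite sums (lists of coefficient/group-element pairs), compared
   through their coefficient functions. *)
From HB Require Import structures.
From mathcomp Require Import all_boot all_order all_algebra.
Set Implicit Arguments. Unset Strict Implicit. Unset Printing Implicit Defensive.
Import GRing.Theory.
Local Open Scope ring_scope.

Section GroupRing.
Variables (R : comNzRingType) (G : groupType).

Definition grelt := seq (R * G).

Definition gr_coef (a : grelt) (g : G) : R := \sum_(p <- a | p.2 == g) p.1.

Definition gr_eq (a b : grelt) : Prop := forall g, gr_coef a g = gr_coef b g.

Definition gr_mul (a b : grelt) : grelt :=
  [seq (p.1 * q.1, (p.2 * q.2)%g) | p <- a, q <- b].

Definition gr_star (a : grelt) : grelt := [seq (p.1, (p.2)^-1%g) | p <- a].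

Definition gr_skew (a : grelt) : Prop :=
  forall g, gr_coef (gr_star a) g = - gr_coef a g.

Definition skew_commutative : Prop :=
  forall a b, gr_skew a -> gr_skew b -> gr_eq (gr_mul a b) (gr_mul b a).

End GroupRing.

Definition char_is (R : nzRingType) (n : nat) : Prop :=
  if n == 0%N then forall m : nat, (0 < m)%N -> m%:R != 0 :> R
  else (n%:R == 0 :> R) /\ forall m : nat, (0 < m < n)%N -> m%:R != 0 :> R.

Definition R2 (R : nzRingType) (r : R) : Prop := r *+ 2 = 0.

Definition R2sq_zero (R : nzRingType) : Prop :=
  forall r s : R, R2 r -> R2 s -> r * s = 0.

Definition R2_nonzero (R : nzRingType) : Prop := exists r : R, R2 r /\ r != 0.

Section Groups.
Variable G : groupType.
Local Open Scope group_scope.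

Inductive gen (P : G -> Prop) : G -> Prop :=
| gen_base g : P g -> gen P g
| gen_one : gen P 1
| gen_inv g : gen P g -> gen P g^-1
| gen_mul g h : gen P g -> gen P h -> gen P (g * h).

Definition abelian_group : Prop := forall g h : G, g * h = h * g.

Definition abelian_sub (P : G -> Prop) : Prop :=
  forall g h, P g -> P h -> g * h = h * g.

Definition Ksub : G -> Prop := gen (fun g : G => g ^+ 2 <> 1).

Definition derived : G -> Prop := gen (fun c : G => exists a b : G, c = [~ a, b]).

Definition exponent_is (n : nat) : Prop :=
  (0 < n)%N /\ (forall g : G, g ^+ n = 1) /\
  forall m, (0 < m < n)%N -> exists g : G, g ^+ m <> 1.

Definition case1_group : Prop :=
  abelian_sub Ksub /\
  exists x : G,
    x ^+ 2 = 1 /\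
    (forall k, Ksub k -> x * k * x = k^-1) /\
    (forall k g, Ksub k -> Ksub (k ^ g)) /\
    (forall g, Ksub g -> (exists n, g = x ^+ n) -> g = 1) /\
    (forall g, exists k n, Ksub k /\ g = k * x ^+ n).

Definition derived_cyclic_order2 : Prop :=
  exists c : G, c <> 1 /\ (forall g, derived g <-> g = 1 \/ g = c).

Definition quotient_elem_abelian2 : Prop :=
  (forall g h : G, derived [~ g, h]) /\ (forall g : G, derived (g ^+ 2)).

Definition order2 (g : G) : Prop := g <> 1 /\ g ^+ 2 = 1.

Definition order2_commute : Prop :=
  forall g h : G, order2 g -> order2 h -> g * h = h * g.

End Groups.

(* The proof separates the ring side from the group theory.
   - Ring side.  (RG)^-_* is spanned by the atoms r g (g^2 = 1, 2r = 0) and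
     r (g - g^-1) (g^2 <> 1) [skew_decomp, skew_ind], so it is commutative iff
     any two atoms commute [skew_commutative_of_atoms].  Comparing coefficients,
     this is governed by three local conditions: every involution centralizes or
     inverts each g with g^2 <> 1; two involutions commute unless R_2 R_2 = 0;
     two non-commuting g, h with g^2, h^2 <> 1 satisfy the relations of Q8 and
     4 = 0 in R [atoms_commute, and conversely section Necessity, which tests
     commutativity on well-chosen pairs of atoms at the coefficient of g h].
   - Group side.  If the generators of K = <g | g^2 <> 1> commute, the local
     conditions make G the semidirect product of case 1 [case1_of_local];
     otherwise the square z of a non-commuting generator is the unique
     non-trivial square and commutator, giving case 2 [case2_of_local].
     Conversely both structures satisfy the local conditions [local_of_case1,
     local_of_case2]. *)
From mathcomp Require Import all_boot all_order all_algebra ring.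
From Stdlib Require Import Classical.
Set Implicit Arguments. Unset Strict Implicit. Unset Printing Implicit Defensive.

Section GroupFacts.
Variable G : groupType.
Local Open Scope group_scope.
Implicit Types g h k u v w x y : G.

Lemma sq1_invg h : h ^+ 2 = 1 -> h^-1 = h.
Proof. by rewrite expg2 => /mulg1_eq. Qed.

Lemma sq1_expg h n : h ^+ 2 = 1 -> h ^+ n = 1 \/ h ^+ n = h.
Proof.
move=> h2; elim: n => [|n [IH|IH]]; first by left.
- by right; rewrite expgS IH mulg1.
- by left; rewrite expgS IH -expg2.
Qed.

Lemma sq1_of_invg h : h^-1 = h -> h ^+ 2 = 1.
Proof. by move=> hV; rewrite expg2 -{1}hV mulVg. Qed.

Lemma inverts_flip g h : h * g = g^-1 * h -> g * h = h * g^-1.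
Proof. by move=> E; apply: (mulgI g^-1); rewrite mulKg mulgA -E -mulgA mulgV mulg1. Qed.

Definition generators_commute : Prop :=
  forall g h, g ^+ 2 <> 1 -> h ^+ 2 <> 1 -> commute g h.

Definition involutions_centralize_or_invert : Prop :=
  forall g h, g ^+ 2 <> 1 -> h ^+ 2 = 1 -> commute h g \/ h * g = g^-1 * h.

Definition quat_rel g h : Prop :=
  g * h = g^-1 * h^-1 /\ g * h = h * g^-1 /\ g * h = h^-1 * g.

Definition noncommuting_generators_quat : Prop :=
  forall g h, g ^+ 2 <> 1 -> h ^+ 2 <> 1 -> ~ commute g h -> quat_rel g h.

Lemma product_not_involution g h : involutions_centralize_or_invert ->
  g ^+ 2 <> 1 -> h ^+ 2 <> 1 -> ~ commute g h -> (g * h) ^+ 2 <> 1.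
Proof.
move=> CI g2 h2 ngh gh2; case: (CI g (g * h) g2 gh2) => E.
  by apply: ngh; apply: (mulgI g); rewrite -E mulgA.
by rewrite mulKg in E; apply: h2; rewrite expg2 -{1}E -mulgA -expg2.
Qed.

Lemma commute_gen (P : G -> Prop) x :
  (forall g, P g -> commute x g) -> forall y, gen P y -> commute x y.
Proof.
move=> Px y; elim=> [g /Px| |g _ IH|g h _ IH1 _ IH2] //.
- exact: commute1.
- exact: commuteV.
- exact: commuteM.
Qed.

Lemma Ksub_abelian : generators_commute -> abelian_sub (@Ksub G).
Proof.
move=> GC x y Kx Ky; apply: commute_sym; apply: (commute_gen _ Kx) => g Hg.
by apply: commute_sym; apply: (commute_gen _ Ky) => k Hk; apply: GC.
Qed.

(* K is normal: it is generated by a conjugation-invariant set. *)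
Lemma Ksub_conj k y : Ksub k -> Ksub (k ^ y).
Proof.
elim=> [g Hg| |g _ IH|g h _ IH1 _ IH2].
- by apply: gen_base; rewrite -conjXg => /eqP; rewrite conjg_eq1 => /eqP.
- by rewrite conj1g; exact: gen_one.
- by rewrite conjVg; exact: gen_inv.
- by rewrite conjMg; exact: gen_mul.
Qed.

(* Anything commuting with a generator g of K lies in K: either w is itself a
   generator, or w g is one. *)
Lemma Ksub_of_commute w g : g ^+ 2 <> 1 -> commute w g -> Ksub w.
Proof.
move=> Hg wg; have [w2|w2] := eqVneq (w ^+ 2) 1; last exact/gen_base/eqP.
have Kwg : Ksub (w * g) by apply: gen_base; rewrite expgMn // w2 mul1g.
by rewrite -(mulgK g w); apply: gen_mul => //; apply/gen_inv/gen_base.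
Qed.

Lemma noncommuting_generators : ~ generators_commute ->
  exists g h, g ^+ 2 <> 1 /\ h ^+ 2 <> 1 /\ ~ commute g h.
Proof.
move=> nGC; apply: NNPP => H; apply: nGC => g h g2 h2.
by apply: NNPP => gh; apply: H; exists g, h.
Qed.

Lemma noncommuting_involution : generators_commute -> ~ abelian_group G ->
  exists h g, h ^+ 2 = 1 /\ g ^+ 2 <> 1 /\ ~ commute h g.
Proof.
move=> GC nab.
have [g [h ne]] : exists g h, ~ commute g h.
  apply: NNPP => H; apply: nab => g h; apply: NNPP => gh; apply: H; by exists g, h.
have [g2|g2] := eqVneq (g ^+ 2) 1; have [h2|h2] := eqVneq (h ^+ 2) 1.
- exists h, (g * h); split => //; split.
    move=> gh2; apply: ne.
    by move: (sq1_invg gh2); rewrite invgM (sq1_invg h2) (sq1_invg g2).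
  by move=> E; apply: ne; apply: (mulIg h); rewrite -E mulgA.
- by exists g, h; split; [|split; [exact/eqP|]].
- by exists h, g; split; [|split; [exact/eqP|move/commute_sym]].
- by case: ne; apply: GC; apply/eqP.
Qed.

(* Case 1 of the theorem, derived from the local conditions: an involution h
   not commuting with a generator g inverts all of K and complements it. *)
Section Case1.
Hypotheses (GC : generators_commute) (CI : involutions_centralize_or_invert).
Variables h g : G.
Hypotheses (h2 : h ^+ 2 = 1) (g2 : g ^+ 2 <> 1) (nhg : ~ commute h g).

Let hh : h * h = 1. Proof. by rewrite -expg2. Qed.

(* h inverts every generator of K: were it to centralize one, k, then h k would
   be another generator and h = (h k) k^-1 would commute with g. *)
Lemma involution_inverts_generators k : k ^+ 2 <> 1 -> h * k = k^-1 * h.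
Proof.
move=> k2; case: (CI k2 h2) => // hk; case: nhg; apply: commute_sym.
have hk2 : (h * k) ^+ 2 <> 1 by rewrite expgMn // h2 mul1g.
rewrite -(mulgK k h); apply: commuteM; first exact/commute_sym/GC.
exact/commuteV/commute_sym/GC.
Qed.

(* Hence h inverts all of K, K being abelian. *)
Lemma involution_inverts_K k : Ksub k -> h * k * h = k^-1.
Proof.
elim=> [x x2| |x _ IH|x y Kx IH1 Ky IH2].
- by rewrite involution_inverts_generators // -mulgA hh mulg1.
- by rewrite mulg1 hh invg1.
- by rewrite -[in RHS]IH !invgM (sq1_invg h2) mulgA.
- have -> : h * (x * y) * h = (h * x * h) * (h * y * h).
    by rewrite -!mulgA; congr (_ * _); rewrite (mulgA h h) hh mul1g.
  by rewrite IH1 IH2 -invgM (Ksub_abelian GC Ky Kx).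
Qed.

Lemma involution_meets_K_trivially y : Ksub y -> (exists n, y = h ^+ n) -> y = 1.
Proof.
move=> Ky [n En]; rewrite En in Ky *; case: (sq1_expg n h2) => hn; rewrite hn // in Ky *.
by case: nhg; apply: (Ksub_abelian GC) => //; apply: gen_base.
Qed.

(* G = K <h>: an involution y either centralizes g, and then lies in K, or
   inverts it, and then y h centralizes g. *)
Lemma K_involution_decomposition y : exists k n, Ksub k /\ y = k * h ^+ n.
Proof.
have [y2|y2] := eqVneq (y ^+ 2) 1; last first.
  by exists y, 0%N; split; [exact/gen_base/eqP | rewrite mulg1].
case: (CI g2 y2) => yg.
  by exists y, 0%N; split; [exact: Ksub_of_commute g2 yg | rewrite mulg1].
exists (y * h), 1%N; split; last by rewrite expg1 -mulgA hh mulg1.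
have hg : h * g = g^-1 * h by case: (CI g2 h2).
apply: (Ksub_of_commute g2).
by rewrite /commute -mulgA hg mulgA -(inverts_flip yg) -!mulgA.
Qed.

Lemma case1_of_local : case1_group G.
Proof.
split; first exact: Ksub_abelian.
exists h; split => //; split; first exact: involution_inverts_K.
split; first by move=> k y; exact: Ksub_conj.
split; [exact: involution_meets_K_trivially | exact: K_involution_decomposition].
Qed.

Lemma noncommuting_involutions : exists x y : G,
  x ^+ 2 = 1 /\ y ^+ 2 = 1 /\ ~ commute x y.
Proof.
have hg : h * g = g^-1 * h by case: (CI g2 h2).
exists h, (h * g); split => //; split.
  by rewrite expg2 mulgA hg -(mulgA g^-1 h h) hh mulg1 mulVg.
rewrite /commute mulgA hh mul1g hg -mulgA hh mulg1 => E.
by apply: g2; rewrite expg2 {2}E mulgV.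
Qed.
End Case1.

Lemma local_of_case1 : case1_group G ->
  generators_commute /\ involutions_centralize_or_invert.
Proof.
move=> [Kab [x [x2 [xk [_ [_ dec]]]]]].
have GC : generators_commute by move=> g h g2 h2; apply: Kab; apply: gen_base.
split => // g h g2 h2; have [k [n [Kk ->]]] := dec h.
case: (sq1_expg n x2) => ->.
  by left; rewrite /commute mulg1; apply: Kab => //; exact: gen_base.
right; have xg : x * g = g^-1 * x.
  by rewrite -(xk g (gen_base g2)) -mulgA -expg2 x2 mulg1.
rewrite -mulgA xg !mulgA; congr (_ * _).
by apply: Kab => //; apply/gen_inv/gen_base.
Qed.

Lemma quat_squares u v : noncommuting_generators_quat ->
  u ^+ 2 <> 1 -> v ^+ 2 <> 1 -> ~ commute u v ->
  u * u = v * v /\ u * u * (u * u) = 1 /\ u ^ v = u^-1.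
Proof.
move=> NQ u2 v2 nuv; have [E1 [E2 _]] := NQ u v u2 v2 nuv.
have cj : u ^ v = u^-1 by rewrite conjgE E2 mulKg.
have uu : u * u = v^-1 * v^-1.
  by apply: (mulIg v); rewrite -mulgA E1 mulgA mulgV mul1g -mulgA mulVg mulg1.
have zv : (u * u) ^ v = u * u by rewrite {1}uu conjgE -!mulgA mulVg mulg1 uu.
have zz : u * u * (u * u) = 1.
  have E : u^-1 * u^-1 = u * u by rewrite -cj -conjMg zv.
  by rewrite -{2}E -mulgA (mulgA u u^-1) mulgV mul1g mulgV.
split=> //; rewrite -[v * v]invgK invgM -uu.
exact/esym/(mulg1_eq zz).
Qed.

(* Case 2 of the theorem, derived from the local conditions when some pair of
   generators a, b does not commute: z = a^2 is the unique non-trivial square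
   and the unique non-trivial commutator. *)
Section Case2.
Hypotheses (NQ : noncommuting_generators_quat) (CI : involutions_centralize_or_invert).
Variables a b : G.
Hypotheses (a2 : a ^+ 2 <> 1) (b2 : b ^+ 2 <> 1) (nab : ~ commute a b).
Local Notation z := (a * a).

Let z_inv : z^-1 = z.
Proof. by have [_ [zz _]] := quat_squares NQ a2 b2 nab; exact: mulg1_eq. Qed.

(* If g^2 <> 1 and g^2 <> z, then g commutes with a and b, so that g a is a
   generator not commuting with b and z = (g a)^2 = g^2 z, a contradiction. *)
Lemma square_1_or_z g : g * g = 1 \/ g * g = z.
Proof.
have [ab _] := quat_squares NQ a2 b2 nab.
have [g2|g2] := eqVneq (g ^+ 2) 1; first by left; rewrite -expg2.
move/eqP: g2 => g2.
case: (classic (commute g a)) => ga; last first.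
  by right; have [-> _] := quat_squares NQ g2 a2 ga.
case: (classic (commute g b)) => gb; last first.
  by right; have [-> _] := quat_squares NQ g2 b2 gb; rewrite ab.
have gab : ~ commute (g * a) b.
  by move=> E; apply: nab; apply: (mulgI g); rewrite !mulgA E mulgA gb.
have sqga : (g * a) * (g * a) = g * g * z.
  by rewrite -!mulgA (mulgA a g) -ga !mulgA.
have [ga2|ga2] := eqVneq ((g * a) ^+ 2) 1.
  right; move: ga2; rewrite expg2 sqga => E.
  by rewrite -z_inv -(mulg1_eq E) invgK.
have [E _] := quat_squares NQ (elimN eqP ga2) b2 gab.
case: g2; rewrite expg2; apply: (mulIg z).
by rewrite mul1g -sqga E -ab.
Qed.

Lemma inverted_commutator g h : g ^+ 2 <> 1 -> g ^ h = g^-1 -> [~ g, h] = z.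
Proof.
move=> g2 E; rewrite commgEl E -invgM.
by case: (square_1_or_z g) => [E'|->] //; case: g2; rewrite expg2.
Qed.

Lemma commutator_1_or_z g h : [~ g, h] = 1 \/ [~ g, h] = z.
Proof.
case: (classic (commute g h)) => gh; first by left; apply/eqP/commgP.
have inv_of x y : y * x = x^-1 * y -> x ^ y = x^-1.
  by move=> E; rewrite conjgE (inverts_flip E) mulKg.
right; have [g2|g2] := eqVneq (g ^+ 2) 1; have [h2|h2] := eqVneq (h ^+ 2) 1.
- have gh2 : (g * h) ^+ 2 <> 1.
    by move=> E; apply: gh; move: (sq1_invg E); rewrite invgM (sq1_invg h2) (sq1_invg g2).
  rewrite commgEl conjgE (sq1_invg g2) (sq1_invg h2) !mulgA.
  case: (square_1_or_z (g * h)); rewrite !mulgA => // E.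
  by case: gh2; rewrite expg2 !mulgA.
- rewrite -invgR; case: (CI (elimN eqP h2) g2) => E; first by case: gh.
  by rewrite (inverted_commutator (elimN eqP h2) (inv_of _ _ E)).
- case: (CI (elimN eqP g2) h2) => E; first by case: gh.
  exact: inverted_commutator (elimN eqP g2) (inv_of _ _ E).
- have [_ [_ E]] := quat_squares NQ (elimN eqP g2) (elimN eqP h2) gh.
  exact: inverted_commutator (elimN eqP g2) E.
Qed.

Lemma derived_1_or_z g : derived g <-> g = 1 \/ g = z.
Proof.
split.
  elim=> [c [x [y ->]]| |x _ IH|x y _ IH1 _ IH2].
  - exact: commutator_1_or_z.
  - by left.
  - by case: IH => ->; [left; rewrite invg1 | right].
  - case: IH1 => ->; case: IH2 => ->; rewrite ?mul1g ?mulg1; try by [left|right].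
    by left; rewrite -{1}z_inv mulVg.
have [_ [_ cab]] := quat_squares NQ a2 b2 nab.
case=> ->; first exact: gen_one.
by apply: gen_base; exists a, b; rewrite commgEl cab -invgM.
Qed.

Lemma exponent4 : exponent_is G 4.
Proof.
split=> //; split.
  move=> g; rewrite (_ : 4 = 2 + 2)%N // expgnDr expg2.
  by case: (square_1_or_z g) => ->; rewrite ?mul1g // -{1}z_inv mulVg.
move=> m /andP [m0 m4]; exists a; case: m m0 m4 => [|[|[|[|m]]]] // _ _.
- by rewrite expg1 => E; apply: a2; rewrite E expg1n.
- move=> E; apply: a2.
  have a4 : a ^+ 4 = a by rewrite (_ : 4 = 1 + 3)%N // expgnDr E mulg1 expg1.
  have [_ [zz _]] := quat_squares NQ a2 b2 nab.
  have a4' : a ^+ 4 = 1 by rewrite (_ : 4 = 2 + 2)%N // expgnDr expg2 zz.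
  by rewrite -a4 a4' expg1n.
Qed.

Lemma case2_of_local :
  exponent_is G 4 /\ derived_cyclic_order2 G /\ quotient_elem_abelian2 G.
Proof.
split; first exact: exponent4.
split; first by exists z; split; [rewrite -expg2 | exact: derived_1_or_z].
split=> [g h|g]; first by apply: gen_base; exists g, h.
by apply/derived_1_or_z; rewrite expg2; exact: square_1_or_z.
Qed.
End Case2.

Lemma derived_conj g y : derived g -> derived (g ^ y).
Proof.
elim=> [c [u [v ->]]| |x _ IH|x w _ IH1 _ IH2].
- by apply: gen_base; exists (u ^ y), (v ^ y); rewrite conjRg.
- by rewrite conj1g; exact: gen_one.
- by rewrite conjVg; exact: gen_inv.
- by rewrite conjMg; exact: gen_mul.
Qed.

(* Conversely, if G' = {1, c} and G/G' is elementary abelian, then c is central,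
   g^-1 = g c for every generator g of K, and any two elements either commute
   or have commutator c; this yields the local conditions. *)
Lemma local_of_case2 : derived_cyclic_order2 G -> quotient_elem_abelian2 G ->
  involutions_centralize_or_invert /\
  forall g h, g ^+ 2 <> 1 -> h ^+ 2 <> 1 -> commute g h \/ quat_rel g h.
Proof.
move=> [c [c1 Dc]] [Dcomm Dsq].
have cc : c * c = 1.
  have /Dc [] // : derived (c * c) by apply: gen_mul; apply/Dc; right.
  by move=> E; case: c1; apply: (mulgI c); rewrite mulg1.
have c_central y : commute c y.
  rewrite /commute conjgC; congr (_ * _).
  have /Dc [] // : derived (c ^ y) by apply: derived_conj; apply/Dc; right.
  by move/eqP; rewrite conjg_eq1 => /eqP.
have inv_gen g : g ^+ 2 <> 1 -> g^-1 = g * c.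
  move=> g2; have [] := proj1 (Dc _) (Dsq g) => E; first by case: g2.
  by apply: (mulgI g); rewrite mulgV mulgA -expg2 E cc.
have comm_1_or_c g h : commute g h \/ g * h = h * g * c.
  have [] := proj1 (Dc _) (Dcomm g h) => E; first by left; apply/commgP/eqP.
  by right; rewrite -E -commgC.
split=> [g h g2 h2|g h g2 h2]; case: (comm_1_or_c g h) => E; try by left.
  by right; rewrite (inv_gen g g2) -mulgA c_central mulgA E -!mulgA cc mulg1.
right; rewrite /quat_rel (inv_gen g g2) (inv_gen h h2).
have hg : h * g = g * h * c by rewrite E -!mulgA cc mulg1.
split; first by rewrite -!mulgA (mulgA c h) c_central -mulgA cc mulg1.
split; first by rewrite mulgA hg -mulgA cc mulg1.
by rewrite -mulgA c_central mulgA hg -mulgA cc mulg1.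
Qed.
End GroupFacts.
Import GRing.Theory.
Local Open Scope ring_scope.

Section Characteristic.
Variable R : nzRingType.

Lemma two_neq0 : ~ char_is R 2 -> 2 != 0 :> R.
Proof.
move=> nc2; apply/negP => /eqP two0; apply: nc2; split; first by rewrite two0.
by case=> [|[|m]] //= _; exact: oner_neq0.
Qed.

(* A non-zero r with 2r = 0 forces 3 <> 0, since r = 3r - 2r. *)
Lemma three_neq0 : R2_nonzero R -> 3 != 0 :> R.
Proof.
move=> [r [r2 r0]]; apply: contra r0 => /eqP three0.
by rewrite -[r](mulr1n r) -[1%N]/(3 - 2)%N mulrnBr // r2 subr0 -mulr_natr three0 mulr0.
Qed.

Lemma char4_of_four : 2 != 0 :> R -> 3 != 0 :> R -> 4 = 0 :> R -> char_is R 4.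
Proof.
move=> two0 three0 four0; split; first exact/eqP.
by case=> [|[|[|[|m]]]] //= _; exact: oner_neq0.
Qed.

Lemma four_of_char4 : char_is R 4 -> 4 = 0 :> R.
Proof. by move=> [/eqP]. Qed.

Lemma one_plus_bools_eq0 (b1 b2 b3 : bool) : 2 != 0 :> R -> 3 != 0 :> R ->
  (1 + b1 + b2 + b3)%N%:R = 0 :> R -> [&& b1, b2 & b3] /\ 4 = 0 :> R.
Proof.
move=> two0 three0; have one0 := oner_neq0 R.
by case: b1 b2 b3 => [] [] [] /= /eqP; rewrite ?(negPf one0) ?(negPf two0) ?(negPf three0) // => /eqP.
Qed.
End Characteristic.

Section GroupRing.
Variables (R : comNzRingType) (G : groupType).
Implicit Types (a b t : grelt R G) (r s : R) (g h u : G).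

Lemma coef_nil u : gr_coef ([::] : grelt R G) u = 0.
Proof. by rewrite /gr_coef big_nil. Qed.

Lemma coef_cons p a u : gr_coef (p :: a) u = (if p.2 == u then p.1 else 0) + gr_coef a u.
Proof. by rewrite /gr_coef big_cons; case: ifP; rewrite ?add0r. Qed.

Lemma coef_cat a b u : gr_coef (a ++ b) u = gr_coef a u + gr_coef b u.
Proof. by rewrite /gr_coef big_cat. Qed.

Lemma coef_star a u : gr_coef (gr_star a) u = gr_coef a u^-1.
Proof. by rewrite /gr_coef big_map; apply: eq_bigl => p /=; rewrite eqg_invLR. Qed.

Lemma coef_filter (P : pred G) a u :
  gr_coef [seq p <- a | P p.2] u = if P u then gr_coef a u else 0.
Proof.
rewrite /gr_coef big_filter_cond; case: ifP => Pu.
  by apply: eq_bigl => p; case: (p.2 =P u) => [->|]; rewrite ?Pu ?andbF.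
by rewrite big_pred0 // => p; case: (p.2 =P u) => [->|]; rewrite ?Pu ?andbF.
Qed.

Lemma coef_mull a b u :
  gr_coef (gr_mul a b) u = \sum_(p <- a) p.1 * gr_coef b ((p.2)^-1 * u)%g.
Proof.
elim: a => [|p a IH]; first by rewrite /gr_mul /= coef_nil big_nil.
rewrite big_cons -IH /gr_mul /= coef_cat; congr (_ + _).
rewrite /gr_coef big_map big_distrr /=; apply: eq_bigl => q /=.
by apply/eqP/eqP => [<-|->]; rewrite ?mulKg ?mulVKg.
Qed.

Lemma coef_mulr a b u :
  gr_coef (gr_mul a b) u = \sum_(q <- b) gr_coef a (u * (q.2)^-1)%g * q.1.
Proof.
rewrite coef_mull /gr_coef.
under eq_bigr => p _ do rewrite big_distrr big_mkcond /=.
rewrite exchange_big /=; apply: eq_bigr => q _.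
rewrite big_distrl /= [RHS]big_mkcond /=; apply: eq_bigr => p _.
have -> : (q.2 == ((p.2)^-1 * u)%g) = (p.2 == (u * (q.2)^-1)%g).
  by apply/eqP/eqP => [->|->]; rewrite invgM invgK ?mulVKg ?mulgVK.
by case: ifP; rewrite ?mulr0 ?mul0r.
Qed.

Definition gr_commute a b : Prop := gr_eq (gr_mul a b) (gr_mul b a).

Lemma gr_commute_sym a b : gr_commute a b -> gr_commute b a.
Proof. by move=> C u; rewrite C. Qed.

Lemma gr_commute0 a b : (forall u, gr_coef a u = 0) -> gr_commute a b.
Proof.
by move=> a0 u; rewrite coef_mulr coef_mull !big1 // => p _; rewrite a0 ?mulr0 ?mul0r.
Qed.

Lemma gr_commute_eq a a' b : gr_eq a a' -> gr_commute a' b -> gr_commute a b.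
Proof.
move=> E C u; rewrite coef_mulr coef_mull.
under eq_bigr => q _ do rewrite E.
under [RHS]eq_bigr => q _ do rewrite E.
by rewrite -coef_mulr -coef_mull C.
Qed.

Lemma gr_commute_cat a1 a2 b :
  gr_commute a1 b -> gr_commute a2 b -> gr_commute (a1 ++ a2) b.
Proof.
move=> C1 C2 u; rewrite coef_mull coef_mulr !big_cat /=.
by rewrite -!coef_mull -!coef_mulr C1 C2.
Qed.

Definition mono r g : grelt R G := [:: (r, g)].
Definition skewpair r g : grelt R G := [:: (r, g); (- r, g^-1%g)].

Definition atom t : Prop :=
  (exists r g, (g ^+ 2 = 1)%g /\ r *+ 2 = 0 /\ t = mono r g) \/
  (exists r g, (g ^+ 2 <> 1)%g /\ t = skewpair r g).

Lemma skewE a : gr_skew a <-> forall u, gr_coef a u^-1 = - gr_coef a u.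
Proof. by split=> Sa u; move: (Sa u); rewrite coef_star. Qed.

Lemma skew_filter (P : pred G) a : (forall u, P u^-1%g = P u) -> gr_skew a ->
  gr_skew [seq p <- a | P p.2].
Proof.
move=> PV /skewE Sa; apply/skewE => u; rewrite !coef_filter PV.
by case: ifP; rewrite ?oppr0.
Qed.

Lemma skew_atom a g : gr_skew a -> exists t, atom t /\
  forall u, gr_coef t u = if (u == g) || (u == g^-1)%g then gr_coef a u else 0.
Proof.
move/skewE=> Sa; set c := gr_coef a g.
have [g2|g2] := eqVneq (g ^+ 2)%g 1%g.
  have gi : g^-1%g = g by apply: mulg1_eq; rewrite -expg2.
  exists (mono c g); split.
    left; exists c, g; split => //; split => //.
    by rewrite mulr2n; apply/eqP; rewrite addr_eq0 -Sa gi.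
  move=> u; rewrite coef_cons coef_nil addr0 gi orbb eq_sym.
  by case: eqP => [->|].
exists (skewpair c g); split; first by right; exists c, g; split => //; apply/eqP.
have gig : (g == g^-1)%g = false.
  by apply/eqP => E; move/eqP: g2; apply; rewrite expg2 {2}E mulgV.
move=> u; rewrite !coef_cons coef_nil addr0 /= !(eq_sym _ u).
case: (eqVneq u g) => [->|_]; first by rewrite gig addr0.
by case: (eqVneq u g^-1%g) => [->|_]; rewrite /= ?eqxx ?add0r ?Sa.
Qed.

Lemma skew_decomp p a : gr_skew (p :: a) -> exists t a',
  atom t /\ gr_skew a' /\ (size a' <= size a)%N /\ gr_eq (p :: a) (t ++ a').
Proof.
move=> Sa; set P := fun v : G => (v != p.2) && (v != p.2^-1)%g.
have [t [At Et]] := skew_atom p.2 Sa.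
exists t, [seq q <- p :: a | P q.2]; split => //; split.
  by apply: skew_filter => // u; rewrite /P eqg_invLR [(u^-1 == _)%g]eqg_invLR invgK andbC.
split; first by rewrite /= /P eqxx /= size_filter count_size.
move=> u; rewrite coef_cat coef_filter Et /P.
by case: (u == p.2) (u == p.2^-1)%g => [] []; rewrite /= ?addr0 ?add0r.
Qed.

Lemma skew_ind (Q : grelt R G -> Prop) : Q [::] ->
  (forall t a' a, atom t -> Q a' -> gr_eq a (t ++ a') -> Q a) ->
  forall a, gr_skew a -> Q a.
Proof.
move=> Q0 Qstep a; elim: {a}(size a) {-2}a (leqnn (size a)) => [|n IH] [|p a] //= sz Sa.
have [t [a' [At [Sa' [sz' E]]]]] := skew_decomp Sa.
by apply: (Qstep t a') => //; apply: IH => //; apply: leq_trans sz' sz.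
Qed.

(* Since the atoms span (RG)^-_*, it is commutative as soon as atoms commute. *)
Lemma skew_commutative_of_atoms :
  (forall t1 t2, atom t1 -> atom t2 -> gr_commute t1 t2) -> skew_commutative R G.
Proof.
move=> Cat.
have Catom t b : atom t -> gr_skew b -> gr_commute t b.
  move=> At; move: b; apply: skew_ind; first exact/gr_commute_sym/gr_commute0/coef_nil.
  move=> t' b' b At' C E; apply/gr_commute_sym/(gr_commute_eq E)/gr_commute_cat.
    exact/gr_commute_sym/Cat.
  exact: gr_commute_sym.
move=> a b Sa Sb; move: a Sa; apply: skew_ind; first exact/gr_commute0/coef_nil.
by move=> t a' a At C E; apply/(gr_commute_eq E)/gr_commute_cat => //; exact: Catom.
Qed.

Lemma zero_of_eq (x y z : R) : x = y -> z = x - y -> z = 0.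
Proof. by move=> -> ->; rewrite subrr. Qed.

Lemma eq_of_sub_mul (x y c d : R) : c = 0 -> x - y = c * d -> x = y.
Proof. by move=> -> /eqP; rewrite mul0r subr_eq0 => /eqP. Qed.

Lemma ifE (b : bool) r : (if b then r else 0) = r * b%:R.
Proof. by case: b; rewrite ?mulr1 ?mulr0. Qed.

Local Ltac expand_coefs := rewrite /gr_mul /= !coef_cons !coef_nil /= !ifE.

Lemma skew_skewpair r g : gr_skew (skewpair r g).
Proof. apply/skewE => u; expand_coefs; rewrite eqg_inv -eqg_invLR; ring. Qed.

Lemma skew_mono r g : (g ^+ 2 = 1)%g -> r *+ 2 = 0 -> gr_skew (mono r g).
Proof.
move=> g2 r2; apply/skewE => u; expand_coefs.
rewrite -eqg_invLR (sq1_invg g2).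
by apply: (eq_of_sub_mul (d := (g == u)%:R) r2); ring.
Qed.

Lemma mono_commute r s g h : r * s = 0 \/ commute g h ->
  gr_commute (mono r g) (mono s h).
Proof.
move=> H u; expand_coefs.
by case: H => [rs0|->]; [rewrite [s * r]mulrC rs0 !mul0r | ring].
Qed.

Lemma skewpair_mono_commute r s g h : s *+ 2 = 0 ->
  commute h g \/ (h * g = g^-1 * h)%g -> gr_commute (skewpair r g) (mono s h).
Proof.
move=> s2 H u; expand_coefs; case: H => E.
  by rewrite E (commuteV E); ring.
rewrite E (inverts_flip E).
set x := ((h * g^-1)%g == u)%:R; set y := ((g^-1 * h)%g == u)%:R.
by apply: (eq_of_sub_mul (d := r * (x - y)) s2); ring.
Qed.

Lemma skewpair_commute r s g h :
  commute g h \/ (4 = 0 :> R /\ quat_rel g h /\ quat_rel g h^-1) ->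
  gr_commute (skewpair r g) (skewpair s h).
Proof.
move=> H u; expand_coefs; case: H => [E|[four0 [[e1 [e2 e3]] [e4 [e5 e6]]]]].
  rewrite -E -(commuteV E) -(commuteV (commute_sym E)).
  by rewrite -(commuteV (commute_sym (commuteV E))); ring.
rewrite invgK in e4 e5 e6.
rewrite -e1 -e2 -e3 -e4 -e5 -e6.
set x := ((g * h)%g == u)%:R; set y := ((g * h^-1)%g == u)%:R.
by apply: (eq_of_sub_mul (d := r * s * (x - y)) four0); ring.
Qed.

Definition involutions_commute_or_R2_annihilates : Prop :=
  forall (g h : G) r s, (g ^+ 2 = 1)%g -> (h ^+ 2 = 1)%g -> r *+ 2 = 0 -> s *+ 2 = 0 ->
  r * s = 0 \/ commute g h.

Lemma atoms_commute :
  involutions_centralize_or_invert G -> involutions_commute_or_R2_annihilates ->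
  (forall g h, (g ^+ 2 <> 1)%g -> (h ^+ 2 <> 1)%g ->
     commute g h \/ (4 = 0 :> R /\ quat_rel g h)) ->
  forall t1 t2, atom t1 -> atom t2 -> gr_commute t1 t2.
Proof.
move=> CI IC NQ t1 t2 [[r [g [g2 [r2 ->]]]]|[r [g [g2 ->]]]]
                     [[s [h [h2 [s2 ->]]]]|[s [h [h2 ->]]]].
- exact/mono_commute/IC.
- exact/gr_commute_sym/skewpair_mono_commute/CI.
- exact/skewpair_mono_commute/CI.
- apply: skewpair_commute; case: (NQ g h g2 h2) => [|[four0 Q]]; first by left.
  have hV2 : (h^-1 ^+ 2 <> 1)%g by rewrite expVgn => /eqP; rewrite invg_eq1 => /eqP.
  case: (NQ g h^-1%g g2 hV2) => [E|[_ QV]]; last by right.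
  by left; rewrite -[h]invgK; apply: commuteV.
Qed.

(* Conversely, commutativity of (RG)^-_* forces the local conditions, by testing
   it on pairs of atoms at the coefficient of g h. *)
Section Necessity.
Hypothesis SC : skew_commutative R G.

(* Testing r g and s h at g h. *)
Lemma involutions_condition_of_skew : involutions_commute_or_R2_annihilates.
Proof.
move=> g h r s g2 h2 r2 s2.
have := SC (skew_mono g2 r2) (skew_mono h2 s2) (g * h)%g; expand_coefs.
rewrite eqxx; case: eqP => [E|_] Ecoef; first by right.
by left; move: Ecoef; rewrite /= mulr1 mulr0 !addr0 mulrC.
Qed.

(* Testing g - g^-1 and r h at g h, with r a non-zero element of R_2. *)
Lemma involutions_centralize_or_invert_of_skew : R2_nonzero R ->
  involutions_centralize_or_invert G.
Proof.
move=> [r [r2 r0]] g h g2 h2.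
have := SC (skew_skewpair 1 g) (skew_mono h2 r2) (g * h)%g; expand_coefs.
have -> : ((g^-1 * h)%g == (g * h)%g) = false.
  by apply/eqP => /mulIg gV; apply: g2; rewrite expg2 -{1}gV mulVg.
rewrite eqxx; case: eqP => [E|_]; first by left.
case: eqP => [E|_] Ecoef.
  by right; apply/esym; have := @inverts_flip _ g^-1%g h; rewrite invgK; apply.
by move: Ecoef; rewrite /= !mulr1 !mulr0 mul1r !addr0 => rE; case/eqP: r0.
Qed.

(* Testing (g - g^-1) and (h - h^-1) at g h: 1 + [g^-1 h^-1 = gh] + [h g^-1 = gh]
   + [h^-1 g = gh] vanishes in R, which forces all three relations and 4 = 0. *)
Lemma quat_of_skew : 2 != 0 :> R -> 3 != 0 :> R -> involutions_centralize_or_invert G ->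
  forall g h, (g ^+ 2 <> 1)%g -> (h ^+ 2 <> 1)%g -> ~ commute g h ->
  4 = 0 :> R /\ quat_rel g h.
Proof.
move=> two0 three0 CI g h g2 h2 ngh.
have := SC (skew_skewpair 1 g) (skew_skewpair 1 h) (g * h)%g; expand_coefs.
have ne_false (x y : G) : x <> y -> (x == y) = false by move/eqP/negPf.
rewrite eqxx (ne_false (g / h)%g); last by move/mulgI/sq1_of_invg.
rewrite (ne_false (g^-1 * h)%g); last by move/mulIg/sq1_of_invg.
rewrite (ne_false (h * g)%g); last by move/esym.
rewrite (ne_false (h^-1 / g)%g); last first.
  by rewrite -invgM => /sq1_of_invg; exact: product_not_involution.
move=> /= E.
have := @one_plus_bools_eq0 _ ((g^-1 * h^-1)%g == (g * h)%g)
  ((h * g^-1)%g == (g * h)%g) ((h^-1 * g)%g == (g * h)%g) two0 three0.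
case=> [|/and3P [/eqP e1 /eqP e2 /eqP e3] four0]; first by apply: (zero_of_eq E); ring.
by split=> //; rewrite /quat_rel e1 e2 e3.
Qed.
End Necessity.

Lemma R2sq_zero_of_involutions : involutions_commute_or_R2_annihilates ->
  (exists x y : G, (x ^+ 2 = 1)%g /\ (y ^+ 2 = 1)%g /\ ~ commute x y) -> R2sq_zero R.
Proof.
by move=> IC [x [y [x2 [y2 nxy]]]] r s r2 s2; case: (IC x y r s x2 y2 r2 s2).
Qed.

Lemma order2_commute_of_involutions : involutions_commute_or_R2_annihilates ->
  ~ R2sq_zero R -> order2_commute G.
Proof.
move=> IC nR2z x y [_ x2] [_ y2].
have [r [s [r2 [s2 rs]]]] : exists r s : R, R2 r /\ R2 s /\ r * s <> 0.
  apply: NNPP => H; apply: nR2z => r s r2 s2.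
  by apply: NNPP => rs; apply: H; exists r, s.
by case: (IC x y r s x2 y2 r2 s2).
Qed.

Lemma involutions_condition_of : R2sq_zero R \/ order2_commute G ->
  involutions_commute_or_R2_annihilates.
Proof.
move=> [R2z|O2] g h r s g2 h2 r2 s2; first by left; exact: R2z.
right; have [->|g1] := eqVneq g 1%g; first exact/commute_sym/commute1.
have [->|h1] := eqVneq h 1%g; first exact: commute1.
by apply: O2; split=> //; apply/eqP.
Qed.
End GroupRing.

Theorem corollary2p6 (R : comNzRingType) (G : groupType) :
  ~ char_is R 2 -> R2_nonzero R -> ~ abelian_group G ->
  (skew_commutative R G <->
     (case1_group G /\ R2sq_zero R)
     \/ (char_is R 4 /\ exponent_is G 4 /\ derived_cyclic_order2 G /\
         quotient_elem_abelian2 G /\ (~ R2sq_zero R -> order2_commute G))).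
Proof.
move=> nc2 R2nz nab; have two0 := two_neq0 nc2; have three0 := three_neq0 R2nz.
split=> [SC|].
  have CI := involutions_centralize_or_invert_of_skew SC R2nz.
  have IC := involutions_condition_of_skew SC.
  have NQ := quat_of_skew SC two0 three0 CI.
  case: (classic (generators_commute G)) => GC.
    have [h [g [h2 [g2 nhg]]]] := noncommuting_involution GC nab.
    left; split; first exact: case1_of_local h2 g2 nhg.
    exact: R2sq_zero_of_involutions IC (noncommuting_involutions CI h2 g2 nhg).
  have [g [h [g2 [h2 ngh]]]] := noncommuting_generators GC.
  have NQG : noncommuting_generators_quat G by move=> x y x2 y2 nxy; case: (NQ x y x2 y2 nxy).
  have [four0 _] := NQ g h g2 h2 ngh.
  have [E4 [D2 Q2]] := case2_of_local NQG CI g2 h2 ngh.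
  right; split; first exact: char4_of_four.
  by do 3 (split=> //); exact: order2_commute_of_involutions.
case=> [[C1 R2z]|[c4 [_ [D2 [Q2 O2]]]]]; apply: skew_commutative_of_atoms.
  have [GC CI] := local_of_case1 C1.
  apply: (atoms_commute CI (involutions_condition_of (or_introl R2z))).
  by move=> g h g2 h2; left; exact: GC.
have [CI Q] := local_of_case2 D2 Q2.
have IC : involutions_commute_or_R2_annihilates R G.
  by apply: involutions_condition_of; case: (classic (R2sq_zero R)) => [|/O2]; [left|right].
apply: (atoms_commute CI IC) => g h g2 h2.
by case: (Q g h g2 h2) => [|q]; [left | right; split=> //; exact: four_of_char4].
Qed.
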